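(* Let $X$ be a complex torus of dimension $g$ with period matrix $\Pi=(\tau\ \ I_g)$, where $\tau=(\tau_{ij})\in M_g(\mathbb{C})$ satisfies $\det(\operatorname{Im}\tau)\neq0$. Consider the $\mathbb{Q}$-linear map $$T:\mathbb{Q}^{\frac{g(g-1)}{2}}\times\mathbb{Q}^{g^2}\times\mathbb{Q}^{\frac{g(g-1)}{2}}\to\mathbb{C}^{\frac{g(g-1)}{2}},\qquad \big((a_{ij})_{1\le i<j\le g},(b_{ij})_{1\le i,j\le g},(c_{ij})_{1\le i<j\le g}\big)\mapsto (w_{ij})_{1\le i<j\le g},$$ where $$w_{ij}=a_{ij}+\sum_{k=1}^g\big(b_{jk}\tau_{ki}-b_{ik}\tau_{kj}\big)+\sum_{1\le l<k\le g}c_{lk}\big(\tau_{kj}\tau_{li}-\tau_{lj}\tau_{ki}\big).$$ Then the Picard number satisfies $\rho(X)=\dim_{\mathbb{Q}}\ker T=2g^2-g-\operatorname{rank}_{\mathbb{Q}}(T)$, where $\operatorname{rank}_{\mathbb{Q}}(T)$ is the $\mathbb{Q}$-dimension of the image of $T$.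
   Context: A complex torus of dimension $g$ with period matrix $\Pi=(\tau\ \ I_g)$ is $X=\mathbb{C}^g/\Lambda$, where $\Lambda$ is the lattice generated by the $2g$ columns of $\Pi$. The Picard number $\rho(X)$ is the rank of the Néron–Severi group $\mathrm{NS}(X)$. *)

From HB Require Import structures.
From mathcomp Require Import all_boot all_order all_algebra.
From mathcomp Require Import reals.
From mathcomp Require Import complex.
Set Implicit Arguments. Unset Strict Implicit. Unset Printing Implicit Defensive.
Import Order.TTheory GRing.Theory Num.Theory.
Local Open Scope ring_scope.

Definition zfree (V : zmodType) (m : nat) (v : 'I_m -> V) : Prop :=
  forall c : 'I_m -> int, \sum_(k < m) (v k *~ c k) = 0 -> forall k, c k = 0.

(* The subset S of V has rank n: it contains n Z-linearly independent
   elements but not n+1.  For a subgroup of a torsion-free group this is the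
   rank of the group; for a Q-subspace of a Q-vector space it is its Q-dimension. *)
Definition has_rank (V : zmodType) (S : V -> Prop) (n : nat) : Prop :=
  (exists v : 'I_n -> V, (forall k, S (v k)) /\ zfree v) /\
  (forall v : 'I_n.+1 -> V, (forall k, S (v k)) -> ~ zfree v).

Definition period_matrix (R : realType) (g : nat) (tau : 'M[R[i]]_g)
  : 'M[R[i]]_(g, g + g) := row_mx tau 1%:M.

(* Neron-Severi group via Appell-Humbert: hermitian forms H(v,w) = v^T H conj(w)
   on C^g whose imaginary part is integer-valued on the lattice Lambda generated
   by the columns of Pi. *)
Definition NS (R : realType) (g : nat) (tau : 'M[R[i]]_g) (H : 'M[R[i]]_g) : Prop :=
  (forall i j, H i j = conjc (H j i)) /\
  (forall a b : 'I_(g + g),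
     exists z : int,
       complex.Im (((col a (period_matrix tau))^T *m H
             *m map_mx (@conjc R) (col b (period_matrix tau))) ord0 ord0)
       = z%:~R).

Definition picard_number (R : realType) (g : nat) (tau : 'M[R[i]]_g) (rho : nat) : Prop :=
  has_rank (NS tau) rho.

Definition Pidx (g : nat) := {p : 'I_g * 'I_g | (p.1 < p.2)%N}.

Definition Tdom (g : nat) :=
  ({ffun Pidx g -> rat} * {ffun 'I_g * 'I_g -> rat} * {ffun Pidx g -> rat})%type.

Definition Tmap (R : realType) (g : nat) (tau : 'M[R[i]]_g) (x : Tdom g)
  : {ffun Pidx g -> R[i]} :=
  let a := x.1.1 in let b := x.1.2 in let c := x.2 in
  [ffun p : Pidx g =>
     let i := (val p).1 in let j := (val p).2 in
     ratr (a p)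
     + \sum_(k < g) (ratr (b (j, k)) * tau k i - ratr (b (i, k)) * tau k j)
     + \sum_(q : Pidx g)
         ratr (c q) * (tau (val q).2 j * tau (val q).1 i
                       - tau (val q).1 j * tau (val q).2 i)].

Definition kerT (R : realType) (g : nat) (tau : 'M[R[i]]_g) (x : Tdom g) : Prop :=
  Tmap tau x = 0.

Definition imT (R : realType) (g : nat) (tau : 'M[R[i]]_g) (y : {ffun Pidx g -> R[i]}) : Prop :=
  exists x, Tmap tau x = y.

(* By Appell-Humbert, NS(X) is the group of hermitian forms H whose imaginary part E is
   integral on Lambda, and E determines H.  In the basis of Lambda given by the columns of
   Pi, E is an alternating integral matrix M, and E comes from a hermitian form (that is,
   E(iu, iv) = E(u, v)) iff W^T M W = 0 for W = (1; -tau).  The entries of W^T M W above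
   the diagonal are the coordinates of T applied to the upper triangular entries of M, so
   NS(X) is a lattice in ker T, of full rank since every kernel element has an integral
   multiple; rank-nullity on Q^(2g^2-g) then gives the formula.  Recovering H from M,
   H = 2i U^T M V with (U V) the inverse of (Pi; conj Pi), is where det(Im tau) != 0 enters. *)
From HB Require Import structures.
From mathcomp Require Import all_boot all_order all_algebra.
From mathcomp Require Import reals complex.
From Stdlib Require Import Classical.
From mathcomp Require Import zify ring.
Set Implicit Arguments. Unset Strict Implicit. Unset Printing Implicit Defensive.
Import Order.TTheory GRing.Theory Num.Theory.
Local Open Scope ring_scope.

Lemma rat_clear_denominators (I : finType) (x : I -> rat) :
  exists2 m : nat, (0 < m)%N & forall i, x i * m%:R \is a Num.int.
Proof.
have denqE j : (`|denq (x j)|%N%:R : rat) = (denq (x j))%:~R.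
  by rewrite natr_absz ger0_norm // ltW // denq_gt0.
exists (\prod_i `|denq (x i)|%N)%N.
  by rewrite prodn_gt0 // => i; rewrite absz_gt0 denq_neq0.
move=> i; apply/intrP; exists (numq (x i) * \prod_(j | j != i) denq (x j)).
rewrite natr_prod (bigD1 i) //= intrM numqE rmorph_prod /= denqE mulrA.
by congr (_ * _); apply: eq_bigr => j _; rewrite denqE.
Qed.

Section AdditiveMaps.
Variables (U V : zmodType) (f : U -> V).
Hypothesis fD : {morph f : x y / x + y}.

Lemma addf0 : f 0 = 0.
Proof. by apply: (@addrI _ (f 0)); rewrite -fD !addr0. Qed.

Lemma addfN x : f (- x) = - f x.
Proof. by apply/eqP; rewrite -subr_eq0 opprK -fD addNr addf0. Qed.

Lemma addfMz x z : f (x *~ z) = f x *~ z.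
Proof.
have fMn n : f (x *+ n) = f x *+ n.
  by elim: n => [|n IH]; rewrite ?mulr0n ?addf0 // !mulrS fD IH.
by case: z => n; [exact: fMn | rewrite NegzE !mulrNz addfN -!pmulrn fMn].
Qed.

Lemma addf_sum (I : finType) (F : I -> U) : f (\sum_i F i) = \sum_i f (F i).
Proof. exact: (big_morph f fD addf0). Qed.

Lemma addf_inj : (forall x, f x = 0 -> x = 0) -> injective f.
Proof.
move=> f0 x y fxy; apply/eqP; rewrite -subr_eq0; apply/eqP/f0.
by rewrite fD addfN fxy subrr.
Qed.

End AdditiveMaps.

Lemma rV_int_relation d (v : 'I_d.+1 -> 'rV[rat]_d) :
  exists c : 'I_d.+1 -> int, (exists k, c k != 0) /\ \sum_k v k *~ c k = 0.
Proof.
pose A := \matrix_(k < d.+1) v k.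
have kerA_neq0 : kermx A != 0.
  rewrite kermx_eq0 /row_free; apply/negP => /eqP rkA.
  by have := rank_leq_col A; rewrite rkA ltnn.
have [u /sub_kermxP uA u_neq0] := rowV0Pn kerA_neq0.
have [i ui] := rV0Pn _ u_neq0.
have [m m_gt0 /(_ _)/intrP int_um] := rat_clear_denominators (fun k => u 0 k).
have [c uc] := fin_all_exists int_um.
exists c; split.
  exists i; apply: contra ui => /eqP ci; move: (uc i); rewrite ci /= => /eqP.
  by rewrite mulf_eq0 pnatr_eq0 eqn0Ngt m_gt0 orbF.
transitivity (m%:R *: (u *m A)); last by rewrite uA scaler0.
rewrite mulmx_sum_row scaler_sumr; apply: eq_bigr => k _.
by rewrite -scaler_int -uc rowK scalerA mulrC.
Qed.

Lemma has_rank_rV_param (V : zmodType) (S : V -> Prop) d (f : 'rV[rat]_d -> V) :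
  {morph f : x y / x + y} -> injective f ->
  (forall x, exists2 m : nat, (0 < m)%N & S (f (x *+ m))) ->
  (forall s, S s -> exists x, f x = s) -> has_rank S d.
Proof.
move=> fD f_inj multS S_im; split.
  have [m m_gt0 Sm] := fin_all_exists2 (fun k : 'I_d => multS (delta_mx 0 k)).
  exists (fun k => f (delta_mx 0 k *+ m k)); split => // c rel k.
  have : \sum_j (delta_mx 0 j *+ m j) *~ c j = 0 :> 'rV[rat]_d.
    apply: f_inj; rewrite addf0 // addf_sum // -[RHS]rel.
    by apply: eq_bigr => j _; rewrite addfMz.
  rewrite [LHS](_ : _ = \row_j ((c j)%:~R * (m j)%:R)); last first.
    rewrite [RHS]row_sum_delta; apply: eq_bigr => j _.
    by rewrite -scaler_int -scaler_nat scalerA mxE.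
  move/rowP/(_ k); rewrite !mxE => /eqP; rewrite mulf_eq0 pnatr_eq0 intr_eq0.
  by case/orP => /eqP // mk0; move: (m_gt0 k); rewrite mk0.
move=> v Sv v_free.
have [x fx] := fin_all_exists (fun k => S_im _ (Sv k)).
have [c [[k ck] rel]] := rV_int_relation x.
move/negP: ck; apply; apply/eqP; apply: (v_free c).
transitivity (f (\sum_k x k *~ c k)); last by rewrite rel addf0.
by rewrite addf_sum //; apply: eq_bigr => j _; rewrite addfMz // fx.
Qed.

Lemma exists_free_spanning_rows n (K : 'rV[rat]_n -> Prop) :
  exists d (B : 'M[rat]_(d, n)),
    [/\ row_free B, forall i, K (row i B) & forall v, K v -> (v <= B)%MS].
Proof.
pose P k := exists B : 'M[rat]_(k, n), row_free B /\ forall i, K (row i B).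
have P0 : P 0%N by exists 0; split; [rewrite /row_free eqn_leq rank_leq_row | case].
have P_le k : P k -> (k <= n)%N by move=> [B [/eqP rkB _]]; rewrite -rkB rank_leq_col.
have [d [[B [B_free KB]] notPd1]] : exists d, P d /\ ~ P d.+1.
  apply: NNPP => noMax.
  have Pk k : P k by elim: k => // k Pk; apply: NNPP => notPk1; apply: noMax; exists k.
  by have := P_le _ (Pk n.+1); rewrite ltnn.
exists d, B; split => // v Kv; apply/negPn/negP => vB.
apply: notPd1; exists (col_mx v B); split.
  have B_lt : (B < col_mx v B)%MS.
    by rewrite ltmxE col_mx_sub submx_refl (negbTE vB) -addsmxE addsmxSr.
  by rewrite /row_free eqn_leq rank_leq_row; have := rank_ltmx B_lt; rewrite (eqP B_free).
move=> i; case: (split_ordP (i : 'I_(1 + d))) => j ->.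
  suff -> : row (lshift d j) (col_mx v B) = v by [].
  by rewrite rowKu; apply/rowP => k; rewrite mxE ord1.
suff -> : row (rshift 1 j) (col_mx v B) = row j B by [].
exact: rowKd.
Qed.

Lemma card_Pidx g : (2 * #|{: Pidx g}| + g = g * g)%N.
Proof.
rewrite card_sig.
have card_lt : #|[pred p : 'I_g * 'I_g | (p.1 < p.2)%N]|
    = (\sum_(i < g) \sum_(j < g) (i < j)%N)%N.
  rewrite -sum1_card pair_big /= big_mkcond /=.
  by apply: eq_bigr => -[i j] _; rewrite inE /=; case: ifP.
have sum_lt_sym : (\sum_(i < g) \sum_(j < g) (i < j)%N = \sum_(i < g) \sum_(j < g) (j < i)%N)%N.
  by rewrite exchange_big.
have sum_trichotomy : (\sum_(i < g) \sum_(j < g) ((i < j)%N + (j < i)%N + (i == j)) = g * g)%N.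
  rewrite -[X in (_ = X * _)%N]card_ord -sum_nat_const; apply: eq_bigr => i _.
  rewrite -[X in (_ = X)%N]card_ord -sum1_card; apply: eq_bigr => j _.
  by rewrite -val_eqE /=; case: ltngtP.
have sum_diag : (\sum_(i < g) \sum_(j < g) (i == j) = g)%N.
  rewrite -[X in (_ = X)%N]card_ord -sum1_card; apply: eq_bigr => i _.
  by rewrite (bigD1 i) //= eqxx big1 // => j /negbTE; rewrite eq_sym => ->.
rewrite -sum_trichotomy card_lt mul2n -addnn {2}sum_lt_sym.
rewrite -[X in (_ + X)%N = _]sum_diag -!big_split /=.
by apply: eq_bigr => i _; rewrite -!big_split.
Qed.

Lemma sum_Pidx g (V : zmodType) (F : 'I_g * 'I_g -> V) :
  \sum_(p : 'I_g * 'I_g | (p.1 < p.2)%N) F p = \sum_(q : Pidx g) F (val q).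
Proof.
rewrite (reindex_omap (val : Pidx g -> _) insub); last by move=> i lt_i; rewrite insubT.
by apply: eq_bigl => -[i lt_i] /=; rewrite lt_i insubT /= eqxx.
Qed.

Section Coordinates.
Variable T : finType.

Definition ffun_of_row (v : 'rV[rat]_#|T|) : {ffun T -> rat} := [ffun t => v 0 (enum_rank t)].
Definition row_of_ffun (F : {ffun T -> rat}) : 'rV[rat]_#|T| := \row_i F (enum_val i).

Lemma row_of_ffunK : cancel row_of_ffun ffun_of_row.
Proof. by move=> F; apply/ffunP => t; rewrite !ffunE mxE enum_rankK. Qed.

Lemma ffun_of_rowK : cancel ffun_of_row row_of_ffun.
Proof. by move=> v; apply/rowP => i; rewrite !mxE ffunE enum_valK. Qed.

Lemma ffun_of_rowD v w : ffun_of_row (v + w) = ffun_of_row v + ffun_of_row w.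
Proof. by apply/ffunP => t; rewrite !ffunE mxE. Qed.

Lemma ffun_of_rowZ q v : ffun_of_row (q *: v) = [ffun t => q * ffun_of_row v t].
Proof. by apply/ffunP => t; rewrite !ffunE mxE. Qed.

End Coordinates.

Definition Tdim g := (#|{: Pidx g}| + #|{: 'I_g * 'I_g}| + #|{: Pidx g}|)%N.

Lemma Tdim_val g : Tdim g = (2 * g ^ 2 - g)%N.
Proof. by have := card_Pidx g; rewrite /Tdim card_prod card_ord mulnn => h; lia. Qed.

Section TdomCoordinates.
Variable g : nat.

Definition Tdom_of_row (v : 'rV[rat]_(Tdim g)) : Tdom g :=
  ((ffun_of_row (lsubmx (lsubmx v)), ffun_of_row (rsubmx (lsubmx v))), ffun_of_row (rsubmx v)).
Definition row_of_Tdom (x : Tdom g) : 'rV[rat]_(Tdim g) :=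
  row_mx (row_mx (row_of_ffun x.1.1) (row_of_ffun x.1.2)) (row_of_ffun x.2).

Lemma row_of_TdomK : cancel row_of_Tdom Tdom_of_row.
Proof.
by case=> [[a b] c]; rewrite /Tdom_of_row /row_of_Tdom !row_mxKl !row_mxKr !row_of_ffunK.
Qed.

Lemma Tdom_of_rowK : cancel Tdom_of_row row_of_Tdom.
Proof. by move=> v; rewrite /Tdom_of_row /row_of_Tdom /= !ffun_of_rowK !hsubmxK. Qed.

Lemma Tdom_of_row_inj : injective Tdom_of_row.
Proof. exact: can_inj Tdom_of_rowK. Qed.

Lemma Tdom_of_rowD v w : Tdom_of_row (v + w) = Tdom_of_row v + Tdom_of_row w.
Proof. by rewrite /Tdom_of_row !linearD /= !ffun_of_rowD. Qed.

Lemma Tdom_of_rowZ q v :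
  Tdom_of_row (q *: v) =
    (([ffun p => q * (Tdom_of_row v).1.1 p], [ffun p => q * (Tdom_of_row v).1.2 p]),
     [ffun p => q * (Tdom_of_row v).2 p]).
Proof. by rewrite /Tdom_of_row !linearZ /= !ffun_of_rowZ. Qed.

Lemma Tdom_of_row_int (v : 'rV[rat]_(Tdim g)) : (forall k, v 0 k \is a Num.int) ->
  [/\ forall p, (Tdom_of_row v).1.1 p \is a Num.int,
      forall p, (Tdom_of_row v).1.2 p \is a Num.int
    & forall p, (Tdom_of_row v).2 p \is a Num.int].
Proof. by move=> v_int; split => p; rewrite /Tdom_of_row ffunE !mxE. Qed.

End TdomCoordinates.

Lemma antisym_mx_diag (F : numDomainType) n (A : 'M[F]_n) i : A^T = - A -> A i i = 0.
Proof.
move/matrixP/(_ i i); rewrite !mxE => /eqP.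
by rewrite -addr_eq0 -mulr2n mulrn_eq0 /= => /eqP.
Qed.

Lemma antisym_mx_eq0 (F : numDomainType) n (A : 'M[F]_n) :
  A^T = - A -> (forall i j : 'I_n, (i < j)%N -> A i j = 0) -> A = 0.
Proof.
move=> A_alt A_up; apply/matrixP => i j; rewrite mxE.
have A_low i' j' : A j' i' = - A i' j' by move/matrixP/(_ i' j'): A_alt; rewrite !mxE.
case: (ltngtP i j) => [/A_up // | /A_up ji | /val_inj ->]; last exact: antisym_mx_diag.
by rewrite A_low ji oppr0.
Qed.

Section AlternatingMatrix.
Variable g : nat.
Implicit Types (a c : {ffun Pidx g -> rat}) (b : {ffun 'I_g * 'I_g -> rat}).

Definition upper_entry a (i j : 'I_g) : rat := oapp a 0 (insub (i, j)).
Definition alt_mx a : 'M[rat]_g := \matrix_(i, j) (upper_entry a i j - upper_entry a j i).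
Definition ffun_mx b : 'M[rat]_g := \matrix_(i, j) b (i, j).

(* The alternating form on [Lambda] with coordinates [x]; [T x] is read off
   [W^T (Tdom_mx x) W] for [W = (1; -tau)], see [Tmap_quadratic]. *)
Definition Tdom_mx (x : Tdom g) : 'M[rat]_(g + g) :=
  block_mx (alt_mx x.1.1) (ffun_mx x.1.2) (- (ffun_mx x.1.2)^T) (alt_mx x.2).

Lemma upper_entry_val a (p : Pidx g) : upper_entry a (val p).1 (val p).2 = a p.
Proof. by rewrite /upper_entry -surjective_pairing valK. Qed.

Lemma upper_entry_lt a (i j : 'I_g) (lt_ij : (i < j)%N) :
  upper_entry a i j = a (exist _ (i, j) lt_ij).
Proof. by rewrite /upper_entry insubT. Qed.

Lemma upper_entry_ge a (i j : 'I_g) : (j <= i)%N -> upper_entry a i j = 0.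
Proof. by move=> le_ji; rewrite /upper_entry insubF //= ltnNge le_ji. Qed.

Lemma upper_entryD a a' i j : upper_entry (a + a') i j = upper_entry a i j + upper_entry a' i j.
Proof. by rewrite /upper_entry; case: insubP => [p _ _|_] /=; rewrite ?ffunE ?addr0. Qed.

Lemma upper_entryZ q a i j : upper_entry [ffun p => q * a p] i j = q * upper_entry a i j.
Proof. by rewrite /upper_entry; case: insubP => [p _ _|_] /=; rewrite ?ffunE ?mulr0. Qed.

Lemma upper_entry_int a i j : (forall p, a p \is a Num.int) -> upper_entry a i j \is a Num.int.
Proof. by move=> a_int; rewrite /upper_entry; case: insubP => [p _ _|_] /=. Qed.

Lemma sum_upper_entry (R : numFieldType) (F : 'I_g -> 'I_g -> R) c :
  \sum_l \sum_k ratr (upper_entry c l k) * F l k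
  = \sum_(q : Pidx g) ratr (c q) * F (val q).1 (val q).2.
Proof.
rewrite pair_big /= (bigID (fun p : 'I_g * 'I_g => (p.1 < p.2)%N)) /=.
rewrite [X in _ + X]big1 ?addr0 => [|[l k] /=]; last first.
  by rewrite -leqNgt => /upper_entry_ge ->; rewrite rmorph0 mul0r.
by rewrite sum_Pidx; apply: eq_bigr => q _; rewrite upper_entry_val.
Qed.

Lemma Tdom_mxD x y : Tdom_mx (x + y) = Tdom_mx x + Tdom_mx y.
Proof.
rewrite /Tdom_mx add_block_mx; congr block_mx; apply/matrixP => i j; rewrite !mxE /=.
- by rewrite !upper_entryD; ring.
- by rewrite ffunE.
- by rewrite ffunE; ring.
- by rewrite !upper_entryD; ring.
Qed.

Lemma Tdom_mxZ q a b c :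
  Tdom_mx (([ffun p => q * a p], [ffun p => q * b p]), [ffun p => q * c p])
  = q *: Tdom_mx ((a, b), c).
Proof.
rewrite /Tdom_mx scale_block_mx; congr block_mx; apply/matrixP => i j; rewrite !mxE /=.
- by rewrite !upper_entryZ; ring.
- by rewrite ffunE.
- by rewrite ffunE; ring.
- by rewrite !upper_entryZ; ring.
Qed.

Lemma Tdom_mx_tr x : (Tdom_mx x)^T = - Tdom_mx x.
Proof.
rewrite /Tdom_mx tr_block_mx opp_block_mx; congr block_mx;
  by apply/matrixP => i j; rewrite !mxE //; ring.
Qed.

Lemma Tdom_mx_eq0 x : Tdom_mx x = 0 -> x = 0.
Proof.
case: x => [[a b] c] /matrixP /= x0.
have -> : a = 0.
  apply/ffunP => p; move: (x0 (lshift g (val p).1) (lshift g (val p).2)).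
  by rewrite block_mxEul !mxE upper_entry_val upper_entry_ge ?subr0 ?ffunE // ltnW ?(valP p).
have -> : c = 0.
  apply/ffunP => p; move: (x0 (rshift g (val p).1) (rshift g (val p).2)).
  by rewrite block_mxEdr !mxE upper_entry_val upper_entry_ge ?subr0 ?ffunE // ltnW ?(valP p).
suff -> : b = 0 by [].
apply/ffunP => -[i k]; move: (x0 (lshift g i) (rshift g k)).
by rewrite block_mxEur !mxE ffunE.
Qed.

Lemma alt_mx_of_antisym (F : 'I_g -> 'I_g -> rat) :
  (forall i j, F j i = - F i j) ->
  alt_mx [ffun p : Pidx g => F (val p).1 (val p).2] = \matrix_(i, j) F i j.
Proof.
move=> F_alt; apply/matrixP => i j; rewrite !mxE.
case: (ltngtP i j) => lt_ij.
- by rewrite (upper_entry_lt _ lt_ij) (upper_entry_ge _ (ltnW lt_ij)) ffunE subr0.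
- by rewrite (upper_entry_lt _ lt_ij) (upper_entry_ge _ (ltnW lt_ij)) ffunE sub0r -F_alt.
- have -> : i = j by apply: val_inj.
  by rewrite subrr; have /eqP := F_alt j j; rewrite -addr_eq0 -mulr2n mulrn_eq0 => /eqP.
Qed.

Lemma Tdom_mx_surj (Q : 'M[rat]_(g + g)) : Q^T = - Q -> exists x, Tdom_mx x = Q.
Proof.
move=> Q_alt.
have Q_low u v : Q v u = - Q u v by move/matrixP/(_ u v): Q_alt; rewrite !mxE.
pose a := [ffun p : Pidx g => Q (lshift g (val p).1) (lshift g (val p).2)].
pose b := [ffun p : 'I_g * 'I_g => Q (lshift g p.1) (rshift g p.2)].
pose c := [ffun p : Pidx g => Q (rshift g (val p).1) (rshift g (val p).2)].
exists ((a, b), c); rewrite /Tdom_mx /= -[RHS]submxK; congr block_mx.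
- rewrite (@alt_mx_of_antisym (fun i j => Q (lshift g i) (lshift g j))) //.
  by apply/matrixP => i j; rewrite !mxE.
- by apply/matrixP => i j; rewrite !mxE ffunE.
- by apply/matrixP => i j; rewrite !mxE ffunE -Q_low.
- rewrite (@alt_mx_of_antisym (fun i j => Q (rshift g i) (rshift g j))) //.
  by apply/matrixP => i j; rewrite !mxE.
Qed.

Lemma Tdom_mx_int (x : Tdom g) :
  (forall p, x.1.1 p \is a Num.int) -> (forall p, x.1.2 p \is a Num.int) ->
  (forall p, x.2 p \is a Num.int) -> forall u v, Tdom_mx x u v \is a Num.int.
Proof.
move=> a_int b_int c_int u v; rewrite /Tdom_mx.
case: (split_ordP u) => i ->; case: (split_ordP v) => j ->.
- by rewrite block_mxEul mxE rpredB // upper_entry_int.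
- by rewrite block_mxEur mxE.
- by rewrite block_mxEdl !mxE rpredN.
- by rewrite block_mxEdr mxE rpredB // upper_entry_int.
Qed.

End AlternatingMatrix.

Section QuadraticForm.
Variables (R : realType) (g : nat) (tau : 'M[R[i]]_g).

Definition Wtau : 'M[R[i]]_(g + g, g) := col_mx 1%:M (- tau).

Lemma alt_mx_form (c : {ffun Pidx g -> rat}) (i j : 'I_g) :
  ((- tau)^T *m map_mx ratr (alt_mx c) *m (- tau)) i j
  = \sum_(q : Pidx g) ratr (c q) * (tau (val q).2 j * tau (val q).1 i
                                    - tau (val q).1 j * tau (val q).2 i).
Proof.
rewrite mxE; transitivity (\sum_l \sum_k ratr (upper_entry c l k) * (tau l i * tau k j)
                          - \sum_l \sum_k ratr (upper_entry c k l) * (tau l i * tau k j)).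
  rewrite -sumrB; under [in RHS]eq_bigr => l _ do rewrite -sumrB.
  rewrite [RHS]exchange_big /=; apply: eq_bigr => k _.
  rewrite !mxE big_distrl /=; apply: eq_bigr => l _.
  by rewrite !mxE rmorphB /=; ring.
rewrite [X in _ - X]exchange_big /= !sum_upper_entry -sumrB.
by apply: eq_bigr => q _ /=; ring.
Qed.

Lemma Tmap_quadratic (x : Tdom g) (p : Pidx g) :
  Tmap tau x p = (Wtau^T *m map_mx ratr (Tdom_mx x) *m Wtau) (val p).1 (val p).2.
Proof.
have lt_p : ((val p).1 < (val p).2)%N := valP p.
rewrite /Wtau /Tdom_mx map_block_mx tr_col_mx mul_row_block mul_row_col trmx1.
rewrite !mul1mx mulmx1 mulmxDl addrA mxE alt_mx_form ffunE /=; congr (_ + _).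
rewrite !mxE upper_entry_val (upper_entry_ge _ (ltnW lt_p)) subr0 -addrA.
congr (_ + _); rewrite -big_split; apply: eq_bigr => k _ /=.
by rewrite !mxE rmorphN /=; ring.
Qed.

Lemma TmapD (x y : Tdom g) : Tmap tau (x + y) = Tmap tau x + Tmap tau y.
Proof.
apply/ffunP => p; rewrite [RHS]ffunE !Tmap_quadratic Tdom_mxD map_mxD.
by rewrite mulmxDr mulmxDl mxE.
Qed.

Lemma Tmap_rowZ q (v : 'rV[rat]_(Tdim g)) :
  Tmap tau (Tdom_of_row (q *: v)) = ratr q *: Tmap tau (Tdom_of_row v).
Proof.
apply/ffunP => p; rewrite [RHS]ffunE !Tmap_quadratic Tdom_of_rowZ Tdom_mxZ -!surjective_pairing.
by rewrite map_mxZ -scalemxAr -scalemxAl mxE.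
Qed.

Lemma kerT_quadratic (x : Tdom g) :
  kerT tau x <-> Wtau^T *m map_mx ratr (Tdom_mx x) *m Wtau = 0.
Proof.
split => [x0 | W0]; last by apply/ffunP => p; rewrite Tmap_quadratic W0 !ffunE mxE.
apply: antisym_mx_eq0 => [|i j lt_ij].
  rewrite !trmx_mul trmxK map_trmx Tdom_mx_tr map_mxN.
  by rewrite mulNmx mulmxN mulmxA.
by have := Tmap_quadratic x (exist _ (i, j) lt_ij); rewrite x0 ffunE.
Qed.

End QuadraticForm.

Section PeriodForms.
Variables (R : realType) (g : nat) (tau : 'M[R[i]]_g).
Local Notation cj := (@conjc R).

Definition Pi := period_matrix tau.
Definition Pibar := map_mx cj Pi.

(* [imform H] is the matrix of [Im H] on the basis of [Lambda] given by the columns of [Pi]. *)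
Definition imform (H : 'M[R[i]]_g) : 'M[R[i]]_(g + g) :=
  map_mx (fun z => real_complex R (complex.Im z)) (Pi^T *m H *m Pibar).

Lemma map_conjcK m n (A : 'M[R[i]]_(m, n)) : map_mx cj (map_mx cj A) = A.
Proof. by apply/matrixP => i j; rewrite !mxE conjcK. Qed.

Lemma period_formE (H : 'M[R[i]]_g) a b :
  ((col a (period_matrix tau))^T *m H *m map_mx cj (col b (period_matrix tau))) ord0 ord0
  = (Pi^T *m H *m Pibar) a b.
Proof.
rewrite tr_col map_col -row_mul !mxE; apply: eq_bigr => k _; rewrite !mxE.
by congr (_ * _); apply: eq_bigr => l _; rewrite !mxE.
Qed.

Lemma Pi_Wtau : Pi *m Wtau tau = 0.
Proof. by rewrite /Pi /period_matrix /Wtau mul_row_col mulmx1 mul1mx addrN. Qed.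

Section Hermitian.
Variable H : 'M[R[i]]_g.
Hypothesis H_herm : forall i j, H i j = cj (H j i).

Let P := Pi^T *m H *m Pibar.

Lemma imformE : imform H = (2%:R^-1 * 'i%C) *: (map_mx cj P - P).
Proof. by apply/matrixP => a b; rewrite !mxE ImJ_sub; ring. Qed.

Lemma period_form_conj : map_mx cj P = P^T.
Proof.
have H_conj : map_mx cj H = H^T by apply/matrixP => a b; rewrite !mxE H_herm.
by rewrite /P !map_mxM -map_trmx H_conj map_conjcK !trmx_mul trmxK mulmxA.
Qed.

Lemma imform_tr : (imform H)^T = - imform H.
Proof. by rewrite imformE linearZ /= linearB /= !period_form_conj trmxK -scalerN opprB. Qed.

Lemma imform_Wtau : (Wtau tau)^T *m imform H *m Wtau tau = 0.
Proof.
rewrite imformE -scalemxAr -scalemxAl mulmxBr mulmxBl period_form_conj.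
have WPW : (Wtau tau)^T *m P *m Wtau tau = 0.
  by rewrite /P !mulmxA -trmx_mul Pi_Wtau trmx0 !mul0mx.
have WPtW : (Wtau tau)^T *m P^T *m Wtau tau = 0.
  by rewrite /P !trmx_mul trmxK !mulmxA -(mulmxA _ Pi) Pi_Wtau mulmx0.
by rewrite WPW WPtW subrr scaler0.
Qed.

End Hermitian.
End PeriodForms.

Lemma Im_mul2i (R : rcfType) (x : R[i]) :
  real_complex R (complex.Im (2%:R * 'i%C * x)) = x + conjc x.
Proof.
by case: x => a b; apply/eqP; rewrite eq_complex /=; apply/andP; split; apply/eqP; ring.
Qed.

Section AppellHumbert.
Variables (R : realType) (g : nat) (tau : 'M[R[i]]_g).
Hypothesis Im_tau_unit : \det (map_mx (@complex.Im R) tau) != 0.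
Local Notation cj := (@conjc R).
Local Notation Pi := (Pi tau).
Local Notation Pibar := (Pibar tau).
Local Notation Wtau := (Wtau tau).

Definition period_square := col_mx Pi Pibar.

Lemma period_square_unit : period_square \in unitmx.
Proof.
rewrite unitmxE unitfE.
have reduce : block_mx 1%:M (- 1%:M) 0 1%:M *m period_square
    = block_mx (tau - map_mx cj tau) 0 (map_mx cj tau) 1%:M.
  rewrite /period_square /Pibar /Pi /period_matrix mul_block_col map_row_mx map_mx1.
  rewrite !mul1mx mul0mx add0r mulNmx mul1mx opp_row_mx add_row_mx subrr.
  by rewrite /block_mx.
have := congr1 determinant reduce.
rewrite det_mulmx det_ublock det_lblock !det1 !mul1r mulr1 => ->.
have -> : tau - map_mx cj tau
    = (2%:R * 'i%C) *: map_mx (real_complex R) (map_mx (@complex.Im R) tau).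
  by apply/matrixP => i j; rewrite !mxE subcJ; ring.
rewrite detZ det_map_mx mulf_neq0 //; last by rewrite eq_complex /= negb_and Im_tau_unit.
by rewrite expf_neq0 // mulf_neq0 // ?pnatr_eq0 // eq_complex /= negb_and oner_neq0 orbT.
Qed.

(* [(U V)] is the inverse of [(Pi; Pibar)]: [U] and [V] are the dual bases of [Lambda]
   for the complex-linear and the antilinear coordinates. *)
Definition Umx : 'M[R[i]]_(g + g, g) := lsubmx (invmx period_square).
Definition Vmx : 'M[R[i]]_(g + g, g) := rsubmx (invmx period_square).

Lemma period_square_inv_blocks :
  [/\ Pi *m Umx = 1%:M, Pi *m Vmx = 0, Pibar *m Umx = 0 & Pibar *m Vmx = 1%:M].
Proof.
have := mulmxV period_square_unit.
rewrite -[invmx _]hsubmxK /period_square mul_col_row scalar_mx_block.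
by case/eq_block_mx => -> -> -> ->.
Qed.

Lemma Umx_Pi_add_Vmx_Pibar : Umx *m Pi + Vmx *m Pibar = 1%:M.
Proof.
by have := mulVmx period_square_unit; rewrite -[invmx _]hsubmxK /period_square mul_row_col.
Qed.

Lemma Vmx_conj : Vmx = map_mx cj Umx.
Proof.
have [PU PV PbU PbV] := period_square_inv_blocks.
pose X := row_mx (map_mx cj Vmx) (map_mx cj Umx).
have PibarK : map_mx cj Pibar = Pi by rewrite map_conjcK.
have ZX : period_square *m X = 1%:M.
  rewrite /period_square /X mul_col_row scalar_mx_block -{1 2}PibarK -!map_mxM.
  by rewrite PbV PbU PV PU map_mx1 map_mx0.
have invE : invmx period_square = X.
  by rewrite -[X]mul1mx -(mulVmx period_square_unit) -mulmxA ZX mulmx1.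
by rewrite /Vmx invE row_mxKr.
Qed.

Lemma Umx_conj : Umx = map_mx cj Vmx.
Proof. by rewrite Vmx_conj map_conjcK. Qed.

Lemma Vmx_Wtau : Vmx = Wtau *m usubmx Vmx.
Proof.
have [_ PV _ _] := period_square_inv_blocks.
have tauV : tau *m usubmx Vmx + dsubmx Vmx = 0.
  by move: PV; rewrite /Pi /period_matrix -{1}[Vmx]vsubmxK mul_row_col mul1mx.
have dV : dsubmx Vmx = - (tau *m usubmx Vmx).
  by apply/eqP; rewrite -addr_eq0 addrC tauV.
by rewrite /Wtau mul_col_mx mul1mx mulNmx -dV vsubmxK.
Qed.

Lemma Vmx_form0 M : Wtau^T *m M *m Wtau = 0 -> Vmx^T *m M *m Vmx = 0.
Proof.
move=> WMW; rewrite Vmx_Wtau trmx_mul.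
have -> : (usubmx Vmx)^T *m Wtau^T *m M *m (Wtau *m usubmx Vmx)
    = (usubmx Vmx)^T *m (Wtau^T *m M *m Wtau) *m usubmx Vmx by rewrite !mulmxA.
by rewrite WMW mulmx0 mul0mx.
Qed.

Lemma Umx_form0 M : map_mx cj M = M -> Wtau^T *m M *m Wtau = 0 -> Umx^T *m M *m Umx = 0.
Proof.
move=> M_real WMW.
by rewrite Umx_conj map_trmx -[M]M_real -!map_mxM Vmx_form0 ?map_mx0.
Qed.

Definition herm_of_alt (M : 'M[R[i]]_(g + g)) : 'M[R[i]]_g :=
  (2%:R * 'i%C) *: (Umx^T *m M *m Vmx).

Lemma herm_of_altD M N : herm_of_alt (M + N) = herm_of_alt M + herm_of_alt N.
Proof. by rewrite /herm_of_alt mulmxDr mulmxDl scalerDr. Qed.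

Lemma herm_of_alt_herm M : map_mx cj M = M -> M^T = - M ->
  forall i j, herm_of_alt M i j = cj (herm_of_alt M j i).
Proof.
move=> M_real M_alt.
suff hT : (herm_of_alt M)^T = map_mx cj (herm_of_alt M).
  by move=> i j; move/matrixP/(_ j i): hT; rewrite !mxE => ->.
have cj2i : cj (2%:R * 'i%C) = - (2%:R * 'i%C).
  apply/eqP; rewrite eq_complex /=.
  by rewrite !(mulr0, mul0r, mulr1, addr0, add0r, subr0, oppr0, eqxx).
rewrite /herm_of_alt map_mxZ [X in _ = X *: _]cj2i linearZ /= !trmx_mul trmxK M_alt !map_mxM.
by rewrite -map_trmx -Umx_conj -Vmx_conj M_real mulNmx mulmxN scaleNr scalerN mulmxA.
Qed.

Lemma imform_herm_of_alt M : map_mx cj M = M -> Wtau^T *m M *m Wtau = 0 ->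
  imform tau (herm_of_alt M) = M.
Proof.
move=> M_real WMW.
set A := Umx *m Pi; set Ab := Vmx *m Pibar.
have sandwich m (X : 'M[R[i]]_(g + g, m)) (Y : 'M[R[i]]_(m, g + g)) :
  (X *m Y)^T *m M *m (X *m Y) = Y^T *m (X^T *m M *m X) *m Y by rewrite trmx_mul !mulmxA.
have formE : Pi^T *m herm_of_alt M *m Pibar = (2%:R * 'i%C) *: (A^T *m M *m Ab).
  by rewrite /herm_of_alt -scalemxAr -scalemxAl /A /Ab trmx_mul !mulmxA.
(* [M] is real and vanishes on the [(1,0)] and [(0,1)] parts, so it is [2 Re] of its
     [(1,1)] part. *)
have M_split : M = A^T *m M *m Ab + Ab^T *m M *m A.
  transitivity ((A + Ab)^T *m M *m (A + Ab)).
    by rewrite Umx_Pi_add_Vmx_Pibar trmx1 mul1mx mulmx1.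
  rewrite [(A + Ab)^T]linearD /= mulmxDl !mulmxDr /A /Ab !mulmxDl !sandwich.
  rewrite Umx_form0 // Vmx_form0 //.
  by rewrite !mulmx0 !mul0mx addr0 add0r addrC.
have M_conj : map_mx cj (A^T *m M *m Ab) = Ab^T *m M *m A.
  have PibarK : map_mx cj Pibar = Pi by rewrite map_conjcK.
  by rewrite !map_mxM -map_trmx M_real /A /Ab !map_mxM -Umx_conj -Vmx_conj PibarK.
apply/matrixP => a b.
have y_conj : cj ((A^T *m M *m Ab) a b) = (Ab^T *m M *m A) a b by rewrite -M_conj [RHS]mxE.
rewrite /imform formE mxE [X in complex.Im X]mxE Im_mul2i y_conj [in RHS]M_split.
by rewrite [in RHS]mxE.
Qed.

Lemma herm_of_alt_imform (H : 'M[R[i]]_g) :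
  (forall i j, H i j = cj (H j i)) -> herm_of_alt (imform tau H) = H.
Proof.
move=> H_herm; have [PU PV PbU PbV] := period_square_inv_blocks.
rewrite imformE // period_form_conj //.
have UPib : Umx^T *m Pibar^T = 0 by rewrite -trmx_mul PbU trmx0.
have UPi : Umx^T *m Pi^T = 1%:M by rewrite -trmx_mul PU trmx1.
have UFV : Umx^T *m ((Pi^T *m H *m Pibar)^T - Pi^T *m H *m Pibar) *m Vmx = - H.
  rewrite !trmx_mul trmxK mulmxBr mulmxBl !mulmxA UPib UPi !mul0mx mul1mx sub0r.
  by rewrite -mulmxA PbV mulmx1.
rewrite /herm_of_alt -scalemxAr -scalemxAl UFV scalerA scalerN.
have -> : 2%:R * 'i%C * (2%:R^-1 * 'i%C) = -1 :> R[i].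
  by rewrite mulrCA !mulrA mulVf ?pnatr_eq0 // mul1r -expr2 sqr_i.
by rewrite scaleN1r opprK.
Qed.

End AppellHumbert.

Lemma map_ratr_mx_real (R : realType) m n (Q : 'M[rat]_(m, n)) :
  map_mx (@conjc R) (map_mx ratr Q) = map_mx ratr Q.
Proof. by apply/matrixP => i j; rewrite !mxE fmorph_rat. Qed.

Section NeronSeveri.
Variables (R : realType) (g : nat) (tau : 'M[R[i]]_g).
Hypothesis Im_tau_unit : \det (map_mx (@complex.Im R) tau) != 0.

Definition NS_of_ker (x : Tdom g) : 'M[R[i]]_g := herm_of_alt tau (map_mx ratr (Tdom_mx x)).

Lemma NS_of_kerD x y : NS_of_ker (x + y) = NS_of_ker x + NS_of_ker y.
Proof. by rewrite /NS_of_ker Tdom_mxD map_mxD herm_of_altD. Qed.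

Lemma imform_NS_of_ker x : kerT tau x -> imform tau (NS_of_ker x) = map_mx ratr (Tdom_mx x).
Proof. by move/kerT_quadratic; apply: imform_herm_of_alt => //; apply: map_ratr_mx_real. Qed.

Lemma NS_of_ker_NS x : kerT tau x -> (forall u v, Tdom_mx x u v \is a Num.int) ->
  NS tau (NS_of_ker x).
Proof.
move=> x_ker x_int; split.
  apply: herm_of_alt_herm => //; first exact: map_ratr_mx_real.
  by rewrite map_trmx Tdom_mx_tr map_mxN.
move=> a b; have /intrP [z xz] := x_int a b; exists z.
apply: complexI; rewrite period_formE rmorph_int.
have /matrixP/(_ a b) := imform_NS_of_ker x_ker.
by rewrite mxE [X in _ = X]mxE xz rmorph_int; apply.
Qed.

Lemma NS_of_ker_eq0 x : kerT tau x -> NS_of_ker x = 0 -> x = 0.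
Proof.
move=> x_ker x0; apply: Tdom_mx_eq0; apply/eqP; rewrite -(@map_mx_eq0 _ R[i] ratr).
rewrite -imform_NS_of_ker // x0 /imform mulmx0 mul0mx; apply/eqP/matrixP => i j.
by rewrite !mxE.
Qed.

Lemma NS_of_ker_surj H : NS tau H -> exists2 x, kerT tau x & NS_of_ker x = H.
Proof.
move=> [H_herm H_int].
have [z zE] : exists z : 'I_(g + g) -> 'I_(g + g) -> int,
    forall a b, complex.Im (((Pi tau)^T *m H *m Pibar tau) a b) = (z a b)%:~R.
  have [z zE] := fin_all_exists (fun ab : 'I_(g + g) * 'I_(g + g) =>
    H_int ab.1 ab.2).
  by exists (fun a b => z (a, b)) => a b; rewrite -period_formE; apply: (zE (a, b)).
pose Q : 'M[rat]_(g + g) := \matrix_(a, b) (z a b)%:~R.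
have QE : map_mx ratr Q = imform tau H.
  by apply/matrixP => a b; rewrite /imform [RHS]mxE zE !mxE !rmorph_int.
have [x xQ] : exists x, Tdom_mx x = Q.
  apply: Tdom_mx_surj; apply/matrixP => a b; apply: (@fmorph_inj _ R[i] ratr).
  by move/matrixP/(_ a b): (imform_tr tau H_herm); rewrite -QE !mxE rmorphN.
have x_ker : kerT tau x by apply/kerT_quadratic; rewrite xQ QE imform_Wtau.
by exists x => //; rewrite /NS_of_ker xQ QE herm_of_alt_imform.
Qed.

End NeronSeveri.

Lemma kerT_rows_sub (R : realType) g (tau : 'M[R[i]]_g) d (B : 'M[rat]_(d, Tdim g)) :
  (forall i, kerT tau (Tdom_of_row (row i B))) ->
  forall v, (v <= B)%MS -> kerT tau (Tdom_of_row v).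
Proof.
move=> B_ker v /mulmxKpV <-; rewrite mulmx_sum_row /kerT.
elim/big_ind: _ => [|u w u0 w0|i _].
- by rewrite (addf0 (@Tdom_of_rowD g)) (addf0 (TmapD tau)).
- by rewrite Tdom_of_rowD TmapD u0 w0 addr0.
- by rewrite Tmap_rowZ B_ker scaler0.
Qed.

Section Ranks.
Variables (R : realType) (g : nat) (tau : 'M[R[i]]_g).
Variables (d : nat) (B : 'M[rat]_(d, Tdim g)).
Hypothesis B_free : row_free B.
Hypothesis B_ker : forall v, kerT tau (Tdom_of_row v) <-> (v <= B)%MS.

Let ker_param (x : 'rV[rat]_d) : Tdom g := Tdom_of_row (x *m B).

Lemma ker_paramD : {morph ker_param : x y / x + y}.
Proof. by move=> x y; rewrite /ker_param mulmxDl Tdom_of_rowD. Qed.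

Lemma ker_param_ker x : kerT tau (ker_param x).
Proof. by apply/B_ker; rewrite submxMl. Qed.

Lemma ker_param_inj : injective ker_param.
Proof. by move=> x y /Tdom_of_row_inj /(row_free_inj B_free). Qed.

Lemma ker_param_surj x : kerT tau x -> exists y, ker_param y = x.
Proof.
move=> x_ker; exists (row_of_Tdom x *m pinvmx B).
by rewrite /ker_param mulmxKpV ?row_of_TdomK // -B_ker row_of_TdomK.
Qed.

Lemma has_rank_kerT : has_rank (kerT tau) d.
Proof.
apply: (has_rank_rV_param ker_paramD ker_param_inj) => [x|]; last exact: ker_param_surj.
by exists 1%N; rewrite // mulr1n; apply: ker_param_ker.
Qed.

Lemma has_rank_imT : has_rank (imT tau) (\rank (B^C)%MS).
Proof.
pose X := row_base (B^C)%MS.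
have XC : (X :=: B^C)%MS := eq_row_base _.
pose f (y : 'rV[rat]_(\rank (B^C)%MS)) := Tmap tau (Tdom_of_row (y *m X)).
have fD : {morph f : y y' / y + y'} by move=> y y'; rewrite /f mulmxDl Tdom_of_rowD TmapD.
apply: (has_rank_rV_param fD) => [|y|_ [x <-]].
- apply: addf_inj => // y /B_ker yXB; apply: (row_free_inj (row_base_free (B^C)%MS)).
  apply/eqP; rewrite mul0mx -submx0 -(capmx_compl B) sub_capmx yXB.
  by rewrite -XC submxMl.
- by exists 1%N => //; exists (Tdom_of_row ((y *+ 1) *m X)).
(* Split the preimage of [x] along [Q^N = ker + B^C]; [T] kills the kernel part. *)
have /sub_addsmxP [[u w] /= xE] : (row_of_Tdom x <= B + B^C)%MS.
  exact/submx_full/addsmx_compl_full.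
have wX : (w *m (B^C)%MS <= X)%MS by rewrite XC submxMl.
exists (w *m (B^C)%MS *m pinvmx X); rewrite /f mulmxKpV //.
have := congr1 (fun v => Tmap tau (Tdom_of_row v)) xE; rewrite /= row_of_TdomK Tdom_of_rowD TmapD.
by have /B_ker -> := submxMl u B; rewrite add0r.
Qed.

Hypothesis Im_tau_unit : \det (map_mx (@complex.Im R) tau) != 0.

Lemma picard_number_kerT : picard_number tau d.
Proof.
pose f x := NS_of_ker tau (ker_param x).
have fD : {morph f : x y / x + y} by move=> x y; rewrite /f ker_paramD NS_of_kerD.
apply: (has_rank_rV_param fD) => [|x|H /(NS_of_ker_surj Im_tau_unit) [x x_ker <-]].
- apply: addf_inj => // x fx0; apply: ker_param_inj.
  rewrite (NS_of_ker_eq0 Im_tau_unit (ker_param_ker x) fx0).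
  exact/esym/(addf0 ker_paramD).
- have [m m_gt0 xm_int] := rat_clear_denominators (fun k => (x *m B) 0 k).
  exists m => //; apply: (NS_of_ker_NS Im_tau_unit); first exact: ker_param_ker.
  have xmB_int k : (x *+ m *m B) 0 k \is a Num.int.
    by rewrite -scaler_nat -scalemxAl mxE mulrC; apply: xm_int.
  have [a_int b_int c_int] := Tdom_of_row_int xmB_int.
  exact: Tdom_mx_int.
by have [y <-] := ker_param_surj x_ker; exists y.
Qed.

End Ranks.

Theorem proposition2p1 (R : realType) (g : nat) (tau : 'M[R[i]]_g) :
  \det (map_mx (@complex.Im R) tau) != 0 ->
  exists rho r : nat,
    picard_number tau rho /\
    has_rank (kerT tau) rho /\
    has_rank (imT tau) r /\
    rho = (2 * g ^ 2 - g - r)%N.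
Proof.
move=> Im_tau_unit.
have [d [B [B_free B_rows B_span]]] :=
  exists_free_spanning_rows (fun v => kerT tau (Tdom_of_row v)).
have B_ker v : kerT tau (Tdom_of_row v) <-> (v <= B)%MS.
  by split; [apply: B_span | apply: kerT_rows_sub].
exists d, (\rank (B^C)%MS); split; first exact: picard_number_kerT B_free B_ker Im_tau_unit.
split; first exact: has_rank_kerT B_free B_ker.
split; first exact: has_rank_imT B_ker.
have := rank_leq_col B; rewrite mxrank_compl (eqP B_free) -Tdim_val; lia.
Qed.
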